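(* Let $\mathcal{X}$ be a finite alphabet with $|\mathcal{X}|=q$, $P_0,P_1$ probability mass functions on $\mathcal{X}$ with the same support $\mathcal{X}$, $\varepsilon>0$, $n>1$, $k^\star\in(1,n]$, and $\mathcal{D}=(x_1,\dots,x_n)$ with independent entries, $x_1,\dots,x_{k^\star-1}\sim P_0$, $x_{k^\star},\dots,x_n\sim P_1$. Let the Offline RR-CPD estimator privatize each $x_i$ by randomized response $W^r$ to $y_i$, set $Q_j(y)=\sum_xP_j(x)W^r(y|x)$, and output $\hat k\in\arg\max_{k\in[n]}\sum_{i=k}^n\log\frac{Q_1(y_i)}{Q_0(y_i)}$. Then for any $\alpha\in[n]$ the estimator is $(\alpha,\beta_r)$-accurate with $$\beta_r\le2\min\Big\{\frac{t_r(1-t_r^M)}{1-t_r};\ \Big(1-\frac{C_r}{2}\Big)^{\alpha/2}\Big\},$$ where $t_r=\exp(-\alpha C_r^2/s_r^2)$, $M=\lfloor\frac{n-1}{\alpha}\rfloor$, $s_r=\min\{2\varepsilon;\tanh(\varepsilon/2)s\}$, $C_r=2\big(\frac{e^\varepsilon-1}{e^\varepsilon+q-1}\big)^2d^2_{\mathrm{TV}}(P_0,P_1)$ and $s=\max_x\log\frac{P_1(x)}{P_0(x)}-\min_x\log\frac{P_1(x)}{P_0(x)}$.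
   Context: Randomized response: $W^r(y|x)=\frac{e^\varepsilon}{e^\varepsilon+q-1}$ if $y=x$ and $\frac{1}{e^\varepsilon+q-1}$ otherwise. $(\alpha,\beta)$-accurate means $\mathbb{P}\{\hat k\notin[k^\star-\alpha,k^\star+\alpha]\}=\beta$. $d_{\mathrm{TV}}(P_0,P_1)=\frac12\sum_x|P_0(x)-P_1(x)|$; $\tanh(\varepsilon/2)=\frac{e^\varepsilon-1}{e^\varepsilon+1}$. *)

From mathcomp Require Import all_boot all_order all_algebra.
From mathcomp Require Import all_classical all_reals.
From mathcomp Require Import sequences realfun exp.
Set Implicit Arguments. Unset Strict Implicit. Unset Printing Implicit Defensive.
Import Order.TTheory GRing.Theory Num.Theory.
Local Open Scope ring_scope.

Section RRCPD.
Variables (R : realType) (X : finType).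

Definition qX : nat := #|X|.

Definition Wr (eps : R) (y x : X) : R :=
  if y == x then expR eps / (expR eps + qX%:R - 1)
  else 1 / (expR eps + qX%:R - 1).

Definition Qout (eps : R) (P : X -> R) (y : X) : R :=
  \sum_(x : X) P x * Wr eps y x.

Definition dTV (P0 P1 : X -> R) : R := 2^-1 * \sum_(x : X) `|P0 x - P1 x|.

Definition tanh_half (eps : R) : R := (expR eps - 1) / (expR eps + 1).

(* max / min of a function over the nonempty finite type X (x0 only seeds the fold) *)
Definition fmax (x0 : X) (f : X -> R) : R := \big[Num.max/f x0]_(x : X) f x.
Definition fmin (x0 : X) (f : X -> R) : R := \big[Num.min/f x0]_(x : X) f x.

Definition llr (P0 P1 : X -> R) (x : X) : R := ln (P1 x / P0 x).
Definition s_range (x0 : X) (P0 P1 : X -> R) : R :=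
  fmax x0 (llr P0 P1) - fmin x0 (llr P0 P1).

Definition s_r (eps : R) (x0 : X) (P0 P1 : X -> R) : R :=
  Num.min (2 * eps) (tanh_half eps * s_range x0 P0 P1).

Definition C_r (eps : R) (P0 P1 : X -> R) : R :=
  2 * ((expR eps - 1) / (expR eps + qX%:R - 1)) ^+ 2 * (dTV P0 P1) ^+ 2.

Definition t_r (eps : R) (x0 : X) (P0 P1 : X -> R) (alpha : nat) : R :=
  expR (- (alpha%:R * C_r eps P0 P1 ^+ 2 / s_r eps x0 P0 P1 ^+ 2)).

Definition beta_bound (eps : R) (x0 : X) (P0 P1 : X -> R) (n alpha : nat) : R :=
  let t := t_r eps x0 P0 P1 alpha in
  let M := (n.-1 %/ alpha)%N in
  2 * Num.min (t * (1 - t ^+ M) / (1 - t))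
              ((1 - C_r eps P0 P1 / 2) `^ (alpha%:R / 2)).

(* Sequences of length n: position i : 'I_n is the paper's index i+1. *)
Definition cusum (eps : R) (P0 P1 : X -> R) (n : nat) (y : {ffun 'I_n -> X})
  (k : nat) : R :=
  \sum_(i < n | (k <= i.+1)%N) ln (Qout eps P1 (y i) / Qout eps P0 (y i)).

Definition Pat (P0 P1 : X -> R) (kstar : nat) (n : nat) (i : 'I_n) : X -> R :=
  if (i.+1 < kstar)%N then P0 else P1.

Definition joint (eps : R) (P0 P1 : X -> R) (kstar n : nat)
  (x y : {ffun 'I_n -> X}) : R :=
  \prod_(i < n) (Pat P0 P1 kstar i (x i) * Wr eps (y i) (x i)).

Definition err_prob (eps : R) (P0 P1 : X -> R) (kstar n alpha : nat)
  (khat : {ffun 'I_n -> X} -> nat) : R :=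
  \sum_(x : {ffun 'I_n -> X})
   \sum_(y : {ffun 'I_n -> X} | (khat y + alpha < kstar)%N || (kstar + alpha < khat y)%N)
     joint eps P0 P1 kstar x y.

End RRCPD.

From mathcomp Require Import all_boot all_order all_algebra.
From mathcomp Require Import all_classical all_reals.
From mathcomp Require Import sequences realfun exp.
From mathcomp Require Import ring lra zify.
Import Order.TTheory GRing.Theory Num.Theory.
Local Open Scope ring_scope.
Set Implicit Arguments. Unset Strict Implicit. Unset Printing Implicit Defensive.

(* The CUSUM estimate misses [kstar] by more than [alpha] only if one of two random walks
   started at the change point is nonnegative at some step [m >= alpha]: the log-likelihood
   ratios [ln (Q1 y_i / Q0 y_i)] of the privatized samples read backwards from [kstar - 1], or
   their negatives read forwards from [kstar].  A step [Z] of either walk has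
   [E exp (Z / 2) = rho], the Bhattacharyya coefficient of the output laws [Q0], [Q1], so
   [exp (S_m / 2) / rho ^ m] is a nonnegative supermartingale and the maximal inequality bounds
   each event by [rho ^ alpha].  Le Cam's inequality [rho ^ 2 <= 1 - dTV(Q0, Q1) ^ 2] and the
   contraction [dTV(Q0, Q1) = (e^eps - 1) / (e^eps + q - 1) * dTV(P0, P1)] turn this into
   [(1 - C_r / 2) ^ (alpha / 2)].  That term is the smaller one in the minimum: [4 C_r <= s_r ^ 2]
   (from [2 tanh (eps / 2) ^ 2 <= eps ^ 2] and [s >= 3 dTV(P0, P1)]) gives
   [(1 - C_r / 2) ^ (alpha / 2) <= exp (- alpha C_r / 4) <= t_r].  If [alpha > n - 1] no miss is
   possible at all. *)

Section ProductLaw.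
Variables (R : realType) (I X : finType) (w : I -> X -> R).
Hypotheses (w_ge0 : forall i x, 0 <= w i x) (w_sum1 : forall i, \sum_x w i x = 1).

Definition prodw (y : {ffun I -> X}) : R := \prod_i w i (y i).

Definition ffun_set (y : {ffun I -> X}) (i : I) (z : X) : {ffun I -> X} :=
  [ffun j => if j == i then z else y j].

Lemma prodw_ge0 y : 0 <= prodw y.
Proof. by apply: prodr_ge0 => i _. Qed.

Lemma sum_prodw : \sum_y prodw y = 1.
Proof.
rewrite /prodw -(bigA_distr_bigA (fun i x => w i x)).
by apply: big1 => i _; rewrite w_sum1.
Qed.

Lemma sum_ffun_coord_eq (i : I) (G : {ffun I -> X} -> R) (z z' : X) :
  (forall y u, G (ffun_set y i u) = G y) ->
  \sum_(y : {ffun I -> X} | y i == z) G y = \sum_(y : {ffun I -> X} | y i == z') G y.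
Proof.
move=> Ginv.
have setK (y : {ffun I -> X}) : y i = z -> ffun_set (ffun_set y i z') i z = y.
  by move=> yz; apply/ffunP => j; rewrite !ffunE; case: eqP => [->|].
rewrite (reindex_onto (fun y => ffun_set y i z) (fun y => ffun_set y i z')) => [|y /eqP];
  last exact: setK.
apply: eq_big => [y|y _]; last exact: Ginv.
rewrite ffunE eqxx eqxx /=; apply/eqP/eqP => [<-|yz']; first by rewrite ffunE eqxx.
by apply/ffunP => j; rewrite !ffunE; case: eqP => [->|].
Qed.

Lemma sum_prodw_indep i (h : {ffun I -> X} -> R) (phi : X -> R) :
  (forall y z, h (ffun_set y i z) = h y) ->
  \sum_y prodw y * (h y * phi (y i)) =
  (\sum_y prodw y * h y) * (\sum_x w i x * phi x).
Proof.
move=> hinv.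
pose G (y : {ffun I -> X}) := (\prod_(j | j != i) w j (y j)) * h y.
have prodwE (y : {ffun I -> X}) : prodw y = w i (y i) * \prod_(j | j != i) w j (y j).
  by rewrite /prodw (bigD1 i).
have Ginv (y : {ffun I -> X}) z : G (ffun_set y i z) = G y.
  rewrite /G hinv; congr (_ * _); apply: eq_bigr => j /negbTE ji.
  by rewrite ffunE ji.
have sum_by_coord (F : X -> R) :
    \sum_(y : {ffun I -> X}) F (y i) * G y = \sum_z F z * \sum_(y : {ffun I -> X} | y i == z) G y.
  rewrite (partition_big (fun y : {ffun I -> X} => y i) predT) //=; apply: eq_bigr => z _.
  by rewrite mulr_sumr; apply: eq_bigr => y /eqP <-.
have coordE z z' := sum_ffun_coord_eq z z' Ginv.
transitivity (\sum_(y : {ffun I -> X}) (w i (y i) * phi (y i)) * G y).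
  by apply: eq_bigr => y _; rewrite prodwE /G; ring.
transitivity ((\sum_(y : {ffun I -> X}) w i (y i) * G y) * (\sum_x w i x * phi x)); last first.
  by congr (_ * _); apply: eq_bigr => y _; rewrite prodwE /G; ring.
rewrite (sum_by_coord (fun u => w i u * phi u)) (sum_by_coord (w i)) [RHS]mulrC mulr_suml.
apply: eq_bigr => x _.
under [in RHS]eq_bigr => z _ do rewrite (coordE z x).
by rewrite -mulr_suml w_sum1 mul1r mulrC.
Qed.

End ProductLaw.

Section MaximalInequality.
Variables (R : realType) (I X : finType) (w : I -> X -> R) (f : X -> R) (rho : R).
Variables (p : nat -> I) (N a : nat).
Hypotheses (w_ge0 : forall i x, 0 <= w i x) (w_sum1 : forall i, \sum_x w i x = 1).
Hypotheses (rho_gt0 : 0 < rho) (rho_le1 : rho <= 1).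
Hypothesis p_inj : forall j k, (j < N)%N -> (k < N)%N -> p j = p k -> j = k.
Hypothesis mgf_le : forall j, (j < N)%N -> \sum_x w (p j) x * expR (f x / 2) <= rho.

Definition walk m (y : {ffun I -> X}) : R := \sum_(j < m) f (y (p j)).

Definition exp_walk m y : R := expR (walk m y / 2) / rho ^+ m.

Definition no_crossing m y : bool :=
  all (fun k => (a <= k)%N ==> (walk k y < 0)) (iota 0 m).

Definition crossing y : bool :=
  has (fun m => (a <= m)%N && (0 <= walk m y)) (iota 0 N.+1).

(* [exp_walk] stopped at the first crossing, as a telescoping sum of its increments *)
Definition stopped_exp_walk M y : R :=
  1 + \sum_(m < M) (no_crossing m.+1 y)%:R * (exp_walk m.+1 y - exp_walk m y).

Lemma no_crossingS m y :
  no_crossing m.+1 y = no_crossing m y && ((a <= m)%N ==> (walk m y < 0)).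
Proof. by rewrite /no_crossing -addn1 iotaD all_cat /= andbT. Qed.

Lemma exp_walk_ge0 m y : 0 <= exp_walk m y.
Proof. by rewrite /exp_walk divr_ge0 ?expR_ge0 // exprn_ge0 // ltW. Qed.

Lemma one_le_exp_walk M y :
  (a <= M)%N -> 0 <= walk M y -> 1 <= rho ^+ a * exp_walk M y.
Proof.
move=> aM walk_ge0; rewrite /exp_walk mulrA ler_pdivlMr ?exprn_gt0 // mul1r.
have rhoMa : rho ^+ M <= rho ^+ a.
  by rewrite -(subnKC aM) exprD ler_piMr ?exprn_ge0 ?exprn_ile1 // ltW.
apply: (le_trans rhoMa); apply: ler_peMr; first by rewrite exprn_ge0 // ltW.
by rewrite -[X in X <= _]expR0 ler_expR divr_ge0.
Qed.

Lemma stopped_exp_walkE M y :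
  (no_crossing M y -> stopped_exp_walk M y = exp_walk M y) /\
  (~~ no_crossing M y -> 1 <= rho ^+ a * stopped_exp_walk M y).
Proof.
elim: M => [|M [IHrun IHstop]].
  by split=> // _; rewrite /stopped_exp_walk /exp_walk /walk !big_ord0 mul0r expR0 divr1 addr0.
have stoppedS : stopped_exp_walk M.+1 y =
    stopped_exp_walk M y + (no_crossing M.+1 y)%:R * (exp_walk M.+1 y - exp_walk M y).
  by rewrite /stopped_exp_walk big_ord_recr /= addrA.
split=> [run|stop]; rewrite stoppedS.
  by rewrite run /=; move: run; rewrite no_crossingS => /andP[/IHrun -> _]; ring.
rewrite (negbTE stop) mul0r addr0.
move: stop; rewrite no_crossingS negb_and => /orP[/IHstop //|].
rewrite negb_imply -leNgt => /andP[aM walk_ge0].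
case run: (no_crossing M y); last by apply: IHstop; rewrite run.
by rewrite IHrun //; apply: one_le_exp_walk.
Qed.

Lemma stopped_exp_walk_ge0 M y : 0 <= stopped_exp_walk M y.
Proof.
have [stopE stop_ge] := stopped_exp_walkE M y.
case run: (no_crossing M y); first by rewrite stopE ?exp_walk_ge0.
have := stop_ge (negbT run); rewrite -(pmulr_rge0 _ (exprn_gt0 a rho_gt0)).
exact: le_trans.
Qed.

Lemma crossing_le_stopped y : (crossing y)%:R <= rho ^+ a * stopped_exp_walk N y.
Proof.
case cross: (crossing y); last first.
  by rewrite mulr_ge0 ?stopped_exp_walk_ge0 // exprn_ge0 // ltW.
move/hasP: cross => [m]; rewrite mem_iota add0n ltnS => /andP[_ mN] /andP[am walk_ge0].
have [stopE stop_ge] := stopped_exp_walkE N y.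
case run: (no_crossing N y); last by apply: stop_ge; rewrite run.
rewrite stopE //=.
move: mN; rewrite leq_eqVlt => /orP[/eqP <-|mN]; first exact: one_le_exp_walk.
move: run => /allP /(_ m); rewrite mem_iota add0n mN am /= => /(_ isT).
by rewrite ltNge walk_ge0.
Qed.

Lemma walk_set m k y z :
  (m < N)%N -> (k <= m)%N -> walk k (ffun_set y (p m) z) = walk k y.
Proof.
move=> mN km; apply: eq_bigr => j _; rewrite ffunE.
have jm : (j < m)%N := leq_trans (ltn_ord j) km.
case: eqP => // /(p_inj (ltn_trans jm mN) mN) jE.
by move: jm; rewrite jE ltnn.
Qed.

(* each increment has nonpositive conditional mean, since the step is independent of the past *)
Lemma expect_stopped_exp_walk_le1 : \sum_y prodw w y * stopped_exp_walk N y <= 1.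
Proof.
rewrite /stopped_exp_walk; under eq_bigr do rewrite mulrDr mulr1 mulr_sumr.
rewrite big_split /= sum_prodw // exchange_big /=.
rewrite -[X in _ <= X]addr0 lerD2l; apply: sumr_le0 => m _.
pose past y := (no_crossing m.+1 y)%:R * exp_walk m y.
have incrE y : (no_crossing m.+1 y)%:R * (exp_walk m.+1 y - exp_walk m y) =
    past y * (expR (f (y (p m)) / 2) / rho - 1).
  rewrite /past /exp_walk /walk big_ord_recr /= mulrDl expRD exprSr.
  by field; rewrite !gt_eqF ?exprn_gt0.
under eq_bigr do rewrite incrE.
have past_set y z : past (ffun_set y (p m) z) = past y.
  rewrite /past /exp_walk walk_set // /no_crossing; congr (_%:R * _).
  congr (nat_of_bool _); apply: eq_in_all => k.
  by rewrite mem_iota add0n ltnS => /andP[_ km]; rewrite walk_set.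
rewrite (sum_prodw_indep w_sum1 (fun x => expR (f x / 2) / rho - 1) past_set); apply: mulr_ge0_le0.
  apply: sumr_ge0 => y _; rewrite mulr_ge0 ?prodw_ge0 // /past.
  by rewrite mulr_ge0 ?exp_walk_ge0.
under eq_bigr do rewrite mulrBr mulr1 mulrA.
by rewrite sumrB w_sum1 -mulr_suml subr_le0 ler_pdivrMr // mul1r mgf_le.
Qed.

Lemma prob_crossing_le : \sum_y prodw w y * (crossing y)%:R <= rho ^+ a.
Proof.
apply: (@le_trans _ _ (\sum_y rho ^+ a * (prodw w y * stopped_exp_walk N y))).
  apply: ler_sum => y _; rewrite mulrCA ler_wpM2l ?prodw_ge0 //.
  exact: crossing_le_stopped.
rewrite -mulr_sumr ler_piMr ?expect_stopped_exp_walk_le1 //.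
by rewrite exprn_ge0 // ltW.
Qed.

End MaximalInequality.

Lemma weighted_cauchy_schwarz (R : realFieldType) (Y : finType) (u a b : Y -> R) :
  (forall y, 0 <= u y) ->
  (\sum_y u y * a y * b y) ^+ 2 <= (\sum_y u y * a y ^+ 2) * (\sum_y u y * b y ^+ 2).
Proof.
move=> u_ge0.
have lagrange : \sum_x \sum_y u x * u y * (a x * b y - a y * b x) ^+ 2 =
    2 * ((\sum_y u y * a y ^+ 2) * (\sum_y u y * b y ^+ 2) - (\sum_y u y * a y * b y) ^+ 2).
  transitivity (\sum_x \sum_y (u x * a x ^+ 2 * (u y * b y ^+ 2)
      + u y * a y ^+ 2 * (u x * b x ^+ 2) - 2 * (u x * a x * b x) * (u y * a y * b y))).
    by apply: eq_bigr => x _; apply: eq_bigr => y _; ring.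
  under eq_bigr do rewrite sumrB big_split /=.
  rewrite sumrB big_split /= [in X in _ + X - _]exchange_big /= -!big_distrlr /=.
  by rewrite -mulr_sumr; ring.
have : 0 <= \sum_x \sum_y u x * u y * (a x * b y - a y * b x) ^+ 2.
  apply: sumr_ge0 => x _; apply: sumr_ge0 => y _.
  by rewrite mulr_ge0 ?sqr_ge0 ?mulr_ge0.
by rewrite lagrange pmulr_rge0 // subr_ge0.
Qed.

Section Bhattacharyya.
Variables (R : realType) (Y : finType) (Q0 Q1 : Y -> R).
Hypotheses (Q0_gt0 : forall y, 0 < Q0 y) (Q1_gt0 : forall y, 0 < Q1 y).
Hypotheses (Q0_sum1 : \sum_y Q0 y = 1) (Q1_sum1 : \sum_y Q1 y = 1).

(* [sum_y sqrt (Q0 y * Q1 y)], written as the moment generating function at [1/2] of the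
   log-likelihood ratio under [Q0] *)
Definition bhattacharyya : R := \sum_y Q0 y * expR (ln (Q1 y / Q0 y) / 2).

Lemma expR_llr y : expR (ln (Q1 y / Q0 y)) = Q1 y / Q0 y.
Proof. by rewrite lnK // posrE divr_gt0. Qed.

Lemma bhattacharyya_gt0 : 0 < bhattacharyya.
Proof.
case: (pickP (@predT Y)) => [y0 _|Y0]; last first.
  by move: Q0_sum1; rewrite big_pred0 // => /esym/eqP; rewrite oner_eq0.
rewrite /bhattacharyya (bigD1 y0) //= ltr_pwDl ?mulr_gt0 ?expR_gt0 //.
by apply: sumr_ge0 => y _; rewrite mulr_ge0 ?expR_ge0 // ltW.
Qed.

Lemma bhattacharyyaE : bhattacharyya = \sum_y Q1 y * expR (- ln (Q1 y / Q0 y) / 2).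
Proof.
apply: eq_bigr => y _; set L := ln (Q1 y / Q0 y).
have -> : Q1 y = Q0 y * expR L by rewrite expR_llr mulrC divfK // gt_eqF.
by rewrite -mulrA -expRD; congr (_ * expR _); field.
Qed.

(* Le Cam's inequality, via Cauchy-Schwarz on [sum Q0 |1 - g| (1 + g)] with [g = sqrt (Q1 / Q0)] *)
Lemma bhattacharyya_sqr_le : bhattacharyya ^+ 2 <= 1 - dTV Q0 Q1 ^+ 2.
Proof.
pose g y := expR (ln (Q1 y / Q0 y) / 2).
have Q1E y : Q1 y = Q0 y * g y ^+ 2.
  have -> : g y ^+ 2 = Q1 y / Q0 y.
    by rewrite /g -expRM_natr -[RHS]expR_llr; congr expR; field.
  by rewrite mulrC divfK // gt_eqF.
have sum_Q0g2 : \sum_y Q0 y * g y ^+ 2 = 1.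
  by rewrite -Q1_sum1; apply: eq_bigr => y _; rewrite Q1E.
have cs := weighted_cauchy_schwarz (fun y => `|1 - g y|) (fun y => 1 + g y)
  (fun y => ltW (Q0_gt0 y)).
have tv : \sum_y Q0 y * `|1 - g y| * (1 + g y) = 2 * dTV Q0 Q1.
  rewrite /dTV mulrA mulfV ?pnatr_eq0 // mul1r; apply: eq_bigr => y _.
  have -> : Q0 y - Q1 y = Q0 y * ((1 - g y) * (1 + g y)) by rewrite Q1E; ring.
  rewrite normrM (ger0_norm (ltW (Q0_gt0 y))) normrM mulrA.
  by rewrite (ger0_norm (x := 1 + g y)) // addr_ge0 ?expR_ge0.
have moment2 (c : R) : \sum_y Q0 y * (1 + c * g y) ^+ 2 = 1 + 2 * c * bhattacharyya + c ^+ 2.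
  transitivity (\sum_y (Q0 y + 2 * c * (Q0 y * g y) + c ^+ 2 * (Q0 y * g y ^+ 2))).
    by apply: eq_bigr => y _; ring.
  by rewrite !big_split /= -!mulr_sumr Q0_sum1 sum_Q0g2 mulr1.
have moment2N : \sum_y Q0 y * `|1 - g y| ^+ 2 = 2 - 2 * bhattacharyya.
  rewrite (_ : 2 - 2 * bhattacharyya = 1 + 2 * (-1) * bhattacharyya + (-1) ^+ 2); last by ring.
  by rewrite -moment2; apply: eq_bigr => y _; rewrite real_normK ?num_real // mulN1r.
have moment2P : \sum_y Q0 y * (1 + g y) ^+ 2 = 2 + 2 * bhattacharyya.
  rewrite (_ : 2 + 2 * bhattacharyya = 1 + 2 * 1 * bhattacharyya + 1 ^+ 2); last by ring.
  by rewrite -moment2; apply: eq_bigr => y _; rewrite mul1r.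
rewrite tv moment2N moment2P in cs.
nra.
Qed.

Lemma bhattacharyya_le1 : bhattacharyya <= 1.
Proof.
by have := bhattacharyya_sqr_le; have := bhattacharyya_gt0; have := sqr_ge0 (dTV Q0 Q1); nra.
Qed.

End Bhattacharyya.

Section RandomizedResponse.
Variables (R : realType) (X : finType) (eps : R).
Hypothesis eps_gt0 : 0 < eps.

Let E := expR eps.
Let D := E + (qX X)%:R - 1.

Definition rr_contraction : R := (E - 1) / D.

Lemma rr_denom_gt0 : 0 < D.
Proof. by have := pexpR_gt1 eps_gt0; have := ler0n R (qX X); rewrite /D /E; lra. Qed.

Lemma rr_contraction_gt0 : 0 < rr_contraction.
Proof. by rewrite divr_gt0 ?rr_denom_gt0 // subr_gt0 pexpR_gt1. Qed.

Lemma QoutE (P : X -> R) y : \sum_x P x = 1 -> Qout eps P y = (1 + P y * (E - 1)) / D.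
Proof.
move=> P_sum1; have rest : \sum_(x | x != y) P x = 1 - P y.
  by rewrite -P_sum1 [in RHS](bigD1 y) //= addrC addrK.
rewrite /Qout (bigD1 y) //= (eq_bigr (fun x => P x / D)) => [|x]; last first.
  by rewrite /Wr eq_sym => /negbTE ->; rewrite mul1r.
rewrite -mulr_suml rest /Wr eqxx -/E -/D; field.
exact: lt0r_neq0 rr_denom_gt0.
Qed.

Lemma Qout_gt0 (P : X -> R) y :
  (forall x, 0 <= P x) -> \sum_x P x = 1 -> 0 < Qout eps P y.
Proof.
move=> P_ge0 P_sum1; rewrite QoutE // divr_gt0 ?rr_denom_gt0 //.
by have := P_ge0 y; have := pexpR_gt1 eps_gt0; rewrite /E; nra.
Qed.

Lemma Qout_sum1 (P : X -> R) : \sum_x P x = 1 -> \sum_y Qout eps P y = 1.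
Proof.
move=> P_sum1; under eq_bigr do rewrite QoutE //.
rewrite -mulr_suml big_split /= -mulr_suml P_sum1 mul1r sumr_const.
have -> : #|X|%:R + (E - 1) = D by rewrite /D /qX; ring.
exact/mulfV/lt0r_neq0/rr_denom_gt0.
Qed.

Lemma Qout_sub (P0 P1 : X -> R) y : \sum_x P0 x = 1 -> \sum_x P1 x = 1 ->
  Qout eps P1 y - Qout eps P0 y = rr_contraction * (P1 y - P0 y).
Proof.
move=> P0_sum1 P1_sum1; rewrite !QoutE // /rr_contraction; field.
exact: lt0r_neq0 rr_denom_gt0.
Qed.

Lemma dTV_Qout (P0 P1 : X -> R) : \sum_x P0 x = 1 -> \sum_x P1 x = 1 ->
  dTV (Qout eps P0) (Qout eps P1) = rr_contraction * dTV P0 P1.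
Proof.
move=> P0_sum1 P1_sum1; rewrite /dTV mulrCA; congr (_ * _); rewrite mulr_sumr.
apply: eq_bigr => y _; rewrite distrC Qout_sub // normrM gtr0_norm ?rr_contraction_gt0 //.
by rewrite distrC.
Qed.

Lemma C_rE (P0 P1 : X -> R) : \sum_x P0 x = 1 -> \sum_x P1 x = 1 ->
  C_r eps P0 P1 = 2 * dTV (Qout eps P0) (Qout eps P1) ^+ 2.
Proof. by move=> P0_sum1 P1_sum1; rewrite dTV_Qout // /C_r /rr_contraction /D /E; ring. Qed.

End RandomizedResponse.

Lemma tanh_half_ge0 (R : realType) (eps : R) : 0 <= eps -> 0 <= tanh_half eps.
Proof.
move=> eps_ge0; have E_ge1 : 1 <= expR eps by rewrite -[X in X <= _]expR0 ler_expR.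
by apply: divr_ge0; lra.
Qed.

Lemma tanh_half_le1 (R : realType) (eps : R) : tanh_half eps <= 1.
Proof. by have E_gt0 := expR_gt0 eps; rewrite ler_pdivrMr ?mul1r; lra. Qed.

(* from [1 - eps/2 <= exp (-eps/2)] and the monotonicity of [(E - 1)/(E + 1)] in [E = exp eps] *)
Lemma tanh_half_sqr_le (R : realType) (eps : R) : 0 < eps ->
  2 * tanh_half eps ^+ 2 <= eps ^+ 2.
Proof.
move=> eps_gt0; have th_ge0 := tanh_half_ge0 (ltW eps_gt0).
have th_le1 := tanh_half_le1 eps.
have [eps_ge2|eps_lt2] := leP 2 eps; first nra.
set E := expR eps; set z := 1 - eps / 2.
have z_gt0 : 0 < z by rewrite /z; lra.
have Ez2_le1 : E * z ^+ 2 <= 1.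
  have EwE : E * expR (- (eps / 2)) ^+ 2 = 1.
    by rewrite /E -expRM_natr -expRD -[RHS]expR0; congr expR; field.
  rewrite -EwE ler_wpM2l ?expR_ge0 // ler_sqr ?nnegrE ?expR_ge0 ?(ltW z_gt0) //.
  by have := expR_ge1Dx (- (eps / 2)); rewrite /z; lra.
have th_le : tanh_half eps <= (1 - z ^+ 2) / (1 + z ^+ 2).
  have E_gt0 : 0 < E := expR_gt0 eps.
  rewrite /tanh_half -/E ler_pdivrMr ?addr_gt0 // mulrAC ler_pdivlMr; nra.
have eps_eq : eps = 2 - 2 * z by rewrite /z; field.
have bound : 2 * (1 - z ^+ 2) ^+ 2 <= (2 - 2 * z) ^+ 2 * (1 + z ^+ 2) ^+ 2.
  have : 2 * (1 + z) ^+ 2 <= 4 * (1 + z ^+ 2) ^+ 2 by nra.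
  have := sqr_ge0 (1 - z); nra.
apply: (@le_trans _ _ (2 * ((1 - z ^+ 2) / (1 + z ^+ 2)) ^+ 2)).
  by rewrite ler_pM2l // ler_sqr ?nnegrE //; apply: le_trans th_le.
by rewrite expr_div_n mulrA ler_pdivrMr ?exprn_gt0 ?addr_gt0 ?exprn_gt0 // eps_eq.
Qed.

(* [1 - 3T/4 <= exp (-3T/4)] and [(1 - 3T/4)^2 (1 + T) >= 1 - T] *)
Lemma three_le_of_expR_bound (R : realType) (s T : R) : 0 <= T -> T <= 1 ->
  expR (- s) * (1 + T) ^+ 2 <= (1 - T) ^+ 2 -> 3 * T <= s.
Proof.
move=> T_ge0 T_le1 bound; rewrite leNgt; apply/negP => s_lt.
set p := 1 - 3 * T / 4.
have p_ge0 : 0 <= p by rewrite /p; lra.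
have p_le : p <= expR (- (3 * T / 4)).
  by have := expR_ge1Dx (- (3 * T / 4)); rewrite /p; lra.
have p4_lt : p ^+ 4 < expR (- s).
  apply: (@le_lt_trans _ _ (expR (- (3 * T)))); last by rewrite ltr_expR; lra.
  have -> : - (3 * T) = - (3 * T / 4) * 4%:R by field.
  by rewrite expRM_natr lerXn2r // nnegrE expR_ge0.
have poly : 1 - T <= p ^+ 2 * (1 + T).
  by have := sqr_ge0 (T - 5 / 6); rewrite /p; nra.
have : (1 - T) ^+ 2 <= p ^+ 4 * (1 + T) ^+ 2.
  have -> : p ^+ 4 = (p ^+ 2) ^+ 2 by rewrite -exprM.
  by rewrite -exprMn ler_sqr ?nnegrE; lra.
have : p ^+ 4 * (1 + T) ^+ 2 < expR (- s) * (1 + T) ^+ 2.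
  by rewrite ltr_pM2r // exprn_gt0 //; lra.
lra.
Qed.

Section TotalVariation.
Variables (R : realType) (X : finType) (x0 : X) (P0 P1 : X -> R).
Hypotheses (P0_gt0 : forall x, 0 < P0 x) (P1_gt0 : forall x, 0 < P1 x).
Hypotheses (P0_sum1 : \sum_x P0 x = 1) (P1_sum1 : \sum_x P1 x = 1).

Lemma dTV_ge0 : 0 <= dTV P0 P1.
Proof. by rewrite mulr_ge0 ?invr_ge0 ?ler0n ?sumr_ge0. Qed.

Lemma dTV_le1 : dTV P0 P1 <= 1.
Proof.
have : \sum_x `|P0 x - P1 x| <= \sum_x (P0 x + P1 x).
  apply: ler_sum => x _; apply: le_trans (ler_normB _ _) _.
  by rewrite !ger0_norm // ltW.
by rewrite big_split /= P0_sum1 P1_sum1 /dTV => ?; lra.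
Qed.

Lemma dTV_gt0 : (exists x, P0 x != P1 x) -> 0 < dTV P0 P1.
Proof.
case=> x neq; rewrite mulr_gt0 ?invr_gt0 // (bigD1 x) //= ltr_pwDl ?sumr_ge0 //.
by rewrite normr_gt0 subr_eq0.
Qed.

(* with [A = {P0 < P1}] and [T = dTV P0 P1 = P1 A - P0 A = P0 (~ A) - P1 (~ A)], the bounds
   [exp (- max llr) * P1 A <= P0 A] and [exp (min llr) * P0 (~ A) <= P1 (~ A)] multiply to
   [exp (- s) * P1 A * P0 (~ A) <= P1 A * P0 (~ A) - T], and [P1 A + P0 (~ A) = 1 + T] *)
Lemma expR_s_range_le : expR (- s_range x0 P0 P1) * (1 + dTV P0 P1) ^+ 2 <= (1 - dTV P0 P1) ^+ 2.
Proof.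
set T := dTV P0 P1; set u := fmax x0 (llr P0 P1); set v := fmin x0 (llr P0 P1).
have llr_le x : llr P0 P1 x <= u by apply: le_bigmax.
have ge_llr x : v <= llr P0 P1 x by apply: bigmin_le.
have llrK x : expR (llr P0 P1 x) = P1 x / P0 x by rewrite /llr lnK // posrE divr_gt0.
pose A := [pred x | P0 x < P1 x].
set a := \sum_(x | A x) P1 x; set b := \sum_(x | ~~ A x) P0 x.
set a0 := \sum_(x | A x) P0 x; set b1 := \sum_(x | ~~ A x) P1 x.
have ab1 : a + b1 = 1 by rewrite -P1_sum1 [in RHS](bigID A).
have a0b : a0 + b = 1 by rewrite -P0_sum1 [in RHS](bigID A).
have TE : T = a + b - 1.
  rewrite /T /dTV (bigID A) /=.
  have -> : \sum_(x | A x) `|P0 x - P1 x| = a - a0.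
    rewrite /a /a0 -sumrB; apply: eq_bigr => x Ax.
    by rewrite distrC ger0_norm // subr_ge0 ltW.
  have -> : \sum_(x | ~~ A x) `|P0 x - P1 x| = b - b1.
    rewrite /b /b1 -sumrB; apply: eq_bigr => x Ax.
    by rewrite ger0_norm // subr_ge0 leNgt.
  lra.
have a0_ge : expR (- u) * a <= a0.
  rewrite /a /a0 mulr_sumr; apply: ler_sum => x _.
  have -> : P0 x = P1 x * expR (- llr P0 P1 x).
    by rewrite expRN llrK invf_div mulrC divfK // gt_eqF.
  by rewrite mulrC ler_wpM2l ?(ltW (P1_gt0 x)) // ler_expR lerN2.
have b1_ge : expR v * b <= b1.
  rewrite /b /b1 mulr_sumr; apply: ler_sum => x _.
  have -> : P1 x = P0 x * expR (llr P0 P1 x) by rewrite llrK mulrC divfK // gt_eqF.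
  by rewrite mulrC ler_wpM2l ?(ltW (P0_gt0 x)) // ler_expR.
have [a_ge0 b_ge0] : 0 <= a /\ 0 <= b by split; apply: sumr_ge0 => x _; apply: ltW.
have [a0_ge0 b1_ge0] : 0 <= a0 /\ 0 <= b1 by split; apply: sumr_ge0 => x _; apply: ltW.
have e_le1 : 0 <= 1 - expR (- (u - v)).
  by rewrite subr_ge0 expR_le1 oppr_le0 subr_ge0 (le_trans (ge_llr x0)).
have prod_le : expR (- (u - v)) * (a * b) <= a * b - T.
  have -> : expR (- (u - v)) * (a * b) = (expR (- u) * a) * (expR v * b).
    by rewrite opprB addrC expRD; ring.
  apply: le_trans (_ : a0 * b1 <= _); first by rewrite ler_pM ?mulr_ge0 ?expR_ge0 //; lra.
  have [a0E b1E] : a0 = 1 - b /\ b1 = 1 - a by split; lra.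
  by have -> : a * b - T = a0 * b1 by rewrite a0E b1E TE; ring.
rewrite /s_range -/u -/v.
have := mulr_ge0 e_le1 (sqr_ge0 (a - b)).
rewrite TE in prod_le *; nra.
Qed.

Lemma dTV_le_s_range : 3 * dTV P0 P1 <= s_range x0 P0 P1.
Proof. exact: three_le_of_expR_bound dTV_ge0 dTV_le1 expR_s_range_le. Qed.

End TotalVariation.

Lemma powR_half_le_expR (R : realType) (C S a : R) :
  0 < C -> 4 * C <= S ^+ 2 -> 0 < 1 - C / 2 -> 0 <= a ->
  (1 - C / 2) `^ (a / 2) <= expR (- (a * C ^+ 2 / S ^+ 2)).
Proof.
move=> C_gt0 CS y_gt0 a_ge0; set y := 1 - C / 2 in y_gt0 *.
have S2_gt0 : 0 < S ^+ 2 by lra.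
have ln_le : ln y <= y - 1.
  by have := expR_ge1Dx (ln y); rewrite lnK ?posrE //; lra.
have k_le : a * C ^+ 2 / S ^+ 2 <= a * C / 4.
  rewrite ler_pdivrMr //.
  have : 0 <= a * C * (S ^+ 2 - 4 * C) by rewrite !mulr_ge0 ?subr_ge0 // ltW.
  nra.
rewrite /powR gt_eqF // ler_expR.
have := ler_wpM2l (divr_ge0 a_ge0 (ler0n R 2)) ln_le; rewrite /y; lra.
Qed.

Lemma le_geometric_sum (R : realFieldType) (t : R) (M : nat) :
  0 < t -> t < 1 -> (0 < M)%N -> t <= t * (1 - t ^+ M) / (1 - t).
Proof.
move=> t_gt0 t_lt1 M_gt0; rewrite ler_pdivlMr ?subr_gt0 // ler_pM2l // lerD2l lerN2.
by rewrite -[leRHS]expr1 ler_wiXn2l ?ltW.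
Qed.

Lemma exprn_le_powR_half (R : realType) (b y : R) (a : nat) :
  0 <= b -> b ^+ 2 <= y -> b ^+ a <= y `^ (a%:R / 2).
Proof.
move=> b_ge0 b2_le.
have -> : b ^+ a = (b ^+ 2) `^ (a%:R / 2).
  rewrite -(powR_mulrn 2 b_ge0) -powRrM -(powR_mulrn a b_ge0); congr (_ `^ _).
  by rewrite mulrC divfK ?pnatr_eq0.
by apply: ge0_ler_powR; rewrite ?nnegrE ?divr_ge0 ?sqr_ge0 // (le_trans _ b2_le) ?sqr_ge0.
Qed.

Lemma card_gt1_of_neq (R : realType) (X : finType) (P0 P1 : X -> R) :
  \sum_x P0 x = 1 -> \sum_x P1 x = 1 -> (exists x, P0 x != P1 x) -> (1 < #|X|)%N.
Proof.
move=> P0_sum1 P1_sum1 [x neq]; apply/card_gt1P.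
case: (boolP [exists y, y != x]) => [/existsP[y yx]|/existsPn only_x].
  by exists x, y; rewrite eq_sym.
have sum_at_x (P : X -> R) : \sum_z P z = P x.
  by rewrite (bigD1 x) //= big1 ?addr0 // => z zx; move: (only_x z); rewrite zx.
by move: neq; rewrite -(sum_at_x P0) -(sum_at_x P1) P0_sum1 P1_sum1 eqxx.
Qed.

Lemma rr_contraction_le_tanh_half (R : realType) (X : finType) (eps : R) :
  0 < eps -> (1 < qX X)%N -> rr_contraction X eps <= tanh_half eps.
Proof.
move=> eps_gt0 q_gt1; have E_gt1 : 1 < expR eps by rewrite expR_gt1.
have q_ge2 : 2 <= (qX X)%:R :> R by rewrite (ler_nat R 2).
by rewrite /rr_contraction /tanh_half ler_wpM2l ?subr_ge0 ?(ltW E_gt1) // lef_pV2 ?posrE; lra.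
Qed.

Section BetaBound.
Variables (R : realType) (X : finType) (x0 : X) (P0 P1 : X -> R) (eps : R).
Hypotheses (P0_gt0 : forall x, 0 < P0 x) (P1_gt0 : forall x, 0 < P1 x).
Hypotheses (P0_sum1 : \sum_x P0 x = 1) (P1_sum1 : \sum_x P1 x = 1).
Hypotheses (P0_neq_P1 : exists x, P0 x != P1 x) (eps_gt0 : 0 < eps).

Let Q0_gt0 y : 0 < Qout eps P0 y.
Proof. by apply: Qout_gt0 => // x; apply: ltW. Qed.

Let Q1_gt0 y : 0 < Qout eps P1 y.
Proof. by apply: Qout_gt0 => // x; apply: ltW. Qed.

Lemma C_r_gt0 : 0 < C_r eps P0 P1.
Proof.
by rewrite C_rE // dTV_Qout // mulr_gt0 // exprn_gt0 // mulr_gt0 ?rr_contraction_gt0 ?dTV_gt0.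
Qed.

Lemma C_r_le_s_r : 4 * C_r eps P0 P1 <= s_r eps x0 P0 P1 ^+ 2.
Proof.
have r_le := rr_contraction_le_tanh_half eps_gt0 (card_gt1_of_neq P0_sum1 P1_sum1 P0_neq_P1).
have r_ge0 := ltW (rr_contraction_gt0 X eps_gt0).
have th_sqr := tanh_half_sqr_le eps_gt0.
have s_ge := dTV_le_s_range x0 P0_gt0 P1_gt0 P0_sum1 P1_sum1.
have T_ge0 := dTV_ge0 P0 P1; have T_le1 := dTV_le1 P0_gt0 P1_gt0 P0_sum1 P1_sum1.
have CE : C_r eps P0 P1 = 2 * rr_contraction X eps ^+ 2 * dTV P0 P1 ^+ 2 by [].
have r2_le : rr_contraction X eps ^+ 2 <= tanh_half eps ^+ 2.
  by rewrite ler_sqr ?nnegrE // tanh_half_ge0 // ltW.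
rewrite /s_r minEle; case: ifP => _.
  have T2_le1 : dTV P0 P1 ^+ 2 <= 1 by rewrite expr_le1.
  by rewrite CE; nra.
have : 9 * dTV P0 P1 ^+ 2 <= s_range x0 P0 P1 ^+ 2.
  have -> : 9 * dTV P0 P1 ^+ 2 = (3 * dTV P0 P1) ^+ 2 by ring.
  by rewrite ler_sqr ?nnegrE //; lra.
by rewrite CE; nra.
Qed.

Lemma bhattacharyya_Qout_sqr_le :
  bhattacharyya (Qout eps P0) (Qout eps P1) ^+ 2 <= 1 - C_r eps P0 P1 / 2.
Proof.
have -> : C_r eps P0 P1 / 2 = dTV (Qout eps P0) (Qout eps P1) ^+ 2 by rewrite C_rE //; field.
by apply: bhattacharyya_sqr_le; try exact: Qout_sum1.
Qed.

Lemma bhattacharyya_Qout_exprn_le alpha :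
  bhattacharyya (Qout eps P0) (Qout eps P1) ^+ alpha <= (1 - C_r eps P0 P1 / 2) `^ (alpha%:R / 2).
Proof.
apply: exprn_le_powR_half bhattacharyya_Qout_sqr_le.
by apply/ltW/bhattacharyya_gt0 => //; apply: Qout_sum1.
Qed.

Lemma one_sub_half_C_r_gt0 : 0 < 1 - C_r eps P0 P1 / 2.
Proof.
apply: lt_le_trans bhattacharyya_Qout_sqr_le.
by rewrite exprn_gt0 // bhattacharyya_gt0 //; apply: Qout_sum1.
Qed.

Lemma beta_boundE (n alpha : nat) : (0 < alpha <= n.-1)%N ->
  beta_bound eps x0 P0 P1 n alpha = 2 * (1 - C_r eps P0 P1 / 2) `^ (alpha%:R / 2).
Proof.
case/andP=> alpha_gt0 alpha_le; rewrite /beta_bound /= min_r //.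
have M_gt0 : (0 < n.-1 %/ alpha)%N by rewrite divn_gt0.
have powR_le := powR_half_le_expR C_r_gt0 C_r_le_s_r one_sub_half_C_r_gt0 (ler0n R alpha).
apply: le_trans powR_le (le_geometric_sum (expR_gt0 _) _ M_gt0).
have C_gt0 := C_r_gt0; have s2_gt0 : 0 < s_r eps x0 P0 P1 ^+ 2.
  by have := C_r_le_s_r; lra.
by rewrite expR_lt1 oppr_lt0 divr_gt0 // mulr_gt0 ?ltr0n // exprn_gt0.
Qed.

End BetaBound.

Section TailSums.
Variables (R : zmodType) (n : nat) (i0 : 'I_n) (F : 'I_n -> R).

Definition tail_sum k : R := \sum_(i < n | (k <= i.+1)%N) F i.

Lemma val_insubd_ord k : (k < n)%N -> val (insubd i0 k) = k.
Proof. by move=> kn; rewrite val_insubd kn. Qed.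

Lemma tail_sumS c : (1 <= c <= n)%N -> tail_sum c = F (insubd i0 c.-1) + tail_sum c.+1.
Proof.
move=> c_range; rewrite /tail_sum (bigD1 (insubd i0 c.-1)) /=; last first.
  by rewrite val_insubd_ord; lia.
congr (_ + _); apply: eq_bigl => i; rewrite -(inj_eq val_inj) /= val_insubd_ord; last by lia.
by apply/idP/idP => [/andP[]|i_ge]; [lia | apply/andP; split; lia].
Qed.

Lemma tail_sum_subl b m : (m < b)%N -> (b <= n)%N ->
  tail_sum (b - m) - tail_sum b = \sum_(j < m) F (insubd i0 (b.-2 - j)%N).
Proof.
move=> + b_le; elim: m => [|m IH] m_lt; first by rewrite subn0 subrr big_ord0.
rewrite big_ord_recr /= -IH; last by lia.
rewrite (@tail_sumS (b - m.+1)); last by lia.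
have -> : (b - m.+1).+1 = (b - m)%N by lia.
have -> : (b - m.+1).-1 = (b.-2 - m)%N by lia.
by rewrite -addrA addrC.
Qed.

Lemma tail_sum_subr b m : (1 <= b)%N -> (b + m <= n)%N ->
  tail_sum b - tail_sum (b + m) = \sum_(j < m) F (insubd i0 (b.-1 + j)%N).
Proof.
move=> b_ge1; elim: m => [|m IH] bm_le; first by rewrite addn0 subrr big_ord0.
rewrite big_ord_recr /= -IH; last by lia.
rewrite (@tail_sumS (b + m)); last by lia.
have -> : (b + m).+1 = (b + m.+1)%N by lia.
have -> : (b + m).-1 = (b.-1 + m)%N by lia.
by rewrite opprD addrA addrAC subrK.
Qed.

End TailSums.

Section OfflineCPD.
Variables (R : realType) (X : finType) (P0 P1 : X -> R) (eps : R).
Variables (n kstar alpha : nat) (i0 : 'I_n) (khat : {ffun 'I_n -> X} -> nat).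

Let Q0 := Qout eps P0.
Let Q1 := Qout eps P1.
Let llrQ (y : X) := ln (Q1 y / Q0 y).

Definition out_law (i : 'I_n) : X -> R := Qout eps (Pat P0 P1 kstar i).

Definition misses (y : {ffun 'I_n -> X}) : bool :=
  (khat y + alpha < kstar)%N || (kstar + alpha < khat y)%N.

(* the pre-change walk visits the paper indices [kstar - 1, kstar - 2, ...], the post-change
   walk [kstar, kstar + 1, ...]; paper index [i] is the ordinal [i - 1] *)
Definition pre_pos (j : nat) : 'I_n := insubd i0 (kstar.-2 - j)%N.
Definition post_pos (j : nat) : 'I_n := insubd i0 (kstar.-1 + j)%N.

Lemma err_probE : err_prob eps P0 P1 kstar alpha khat = \sum_(y | misses y) prodw out_law y.
Proof.
rewrite /err_prob exchange_big /=; apply: eq_bigr => y _.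
rewrite /joint -(bigA_distr_bigA (fun i x => Pat P0 P1 kstar i x * Wr eps (y i) x)).
by apply: eq_bigr.
Qed.

Hypothesis kstar_range : (1 < kstar <= n)%N.

Lemma pre_pos_inj j k : (j < kstar.-1)%N -> (k < kstar.-1)%N -> pre_pos j = pre_pos k -> j = k.
Proof. by move=> j_lt k_lt /(congr1 val); rewrite !val_insubd_ord; lia. Qed.

Lemma post_pos_inj j k : (j < (n - kstar).+1)%N -> (k < (n - kstar).+1)%N ->
  post_pos j = post_pos k -> j = k.
Proof. by move=> j_lt k_lt /(congr1 val); rewrite !val_insubd_ord; lia. Qed.

Lemma pre_pos_before j : (j < kstar.-1)%N -> ((pre_pos j).+1 < kstar)%N.
Proof. by move=> j_lt; rewrite val_insubd_ord; lia. Qed.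

Lemma post_pos_after j : (j < (n - kstar).+1)%N -> ((post_pos j).+1 < kstar)%N = false.
Proof. by move=> j_lt; rewrite val_insubd_ord; lia. Qed.

Hypothesis khat_argmax : forall y : {ffun 'I_n -> X},
  (1 <= khat y <= n)%N /\
  (forall k, (1 <= k <= n)%N -> cusum eps P0 P1 y k <= cusum eps P0 P1 y (khat y)).

Lemma misses_crossing y : misses y ->
  crossing llrQ pre_pos kstar.-1 alpha y ||
  crossing (fun x => - llrQ x) post_pos (n - kstar).+1 alpha y.
Proof.
have [/andP[khat_ge1 khat_le] khat_max] := khat_argmax y.
have cusum_le : cusum eps P0 P1 y kstar <= cusum eps P0 P1 y (khat y) by apply: khat_max; lia.
move=> /orP[early|late]; apply/orP; [left|right]; apply/hasP.
  exists (kstar - khat y)%N; first by rewrite mem_iota; lia.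
  apply/andP; split; first by lia.
  have := tail_sum_subl i0 (fun i => llrQ (y i)) (b := kstar) (m := (kstar - khat y)%N).
  rewrite (_ : kstar - (kstar - khat y) = khat y)%N; last by lia.
  move=> /(_ ltac:(lia) ltac:(lia)) walkE.
  by rewrite /walk /pre_pos -walkE subr_ge0.
exists (khat y - kstar)%N; first by rewrite mem_iota; lia.
apply/andP; split; first by lia.
have := tail_sum_subr i0 (fun i => llrQ (y i)) (b := kstar) (m := (khat y - kstar)%N).
rewrite (_ : kstar + (khat y - kstar) = khat y)%N; last by lia.
move=> /(_ ltac:(lia) ltac:(lia)) walkE.
by rewrite /walk /post_pos sumrN -walkE oppr_ge0 subr_le0.
Qed.

Lemma err_prob_eq0 : (n.-1 < alpha)%N -> err_prob eps P0 P1 kstar alpha khat = 0.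
Proof.
move=> alpha_gt; rewrite err_probE big_pred0 // => y; apply/negbTE.
have [/andP[khat_ge1 khat_le] _] := khat_argmax y.
by rewrite /misses; lia.
Qed.

Hypotheses (P0_gt0 : forall x, 0 < P0 x) (P1_gt0 : forall x, 0 < P1 x).
Hypotheses (P0_sum1 : \sum_x P0 x = 1) (P1_sum1 : \sum_x P1 x = 1) (eps_gt0 : 0 < eps).

Lemma out_law_ge0 i y : 0 <= out_law i y.
Proof. by rewrite /out_law /Pat; case: ifP => _; apply/ltW/Qout_gt0 => // x; apply: ltW. Qed.

Lemma out_law_sum1 i : \sum_y out_law i y = 1.
Proof. by rewrite /out_law /Pat; case: ifP => _; apply: Qout_sum1. Qed.

Let Q0_gt0 y : 0 < Q0 y.
Proof. by apply: Qout_gt0 => // x; apply: ltW. Qed.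

Let Q1_gt0 y : 0 < Q1 y.
Proof. by apply: Qout_gt0 => // x; apply: ltW. Qed.

Let bhattacharyyaQ_gt0 : 0 < bhattacharyya Q0 Q1.
Proof. by apply: bhattacharyya_gt0 Q0_gt0 _; apply: Qout_sum1. Qed.

Let bhattacharyyaQ_le1 : bhattacharyya Q0 Q1 <= 1.
Proof. by apply: bhattacharyya_le1 Q0_gt0 Q1_gt0 _ _; apply: Qout_sum1. Qed.

Lemma prob_pre_crossing_le :
  \sum_y prodw out_law y * (crossing llrQ pre_pos kstar.-1 alpha y)%:R
  <= bhattacharyya Q0 Q1 ^+ alpha.
Proof.
apply: prob_crossing_le => //; [exact: out_law_ge0 | exact: out_law_sum1 | |].
  exact: pre_pos_inj.
by move=> j j_lt; rewrite /out_law /Pat pre_pos_before.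
Qed.

Lemma prob_post_crossing_le :
  \sum_y prodw out_law y * (crossing (fun x => - llrQ x) post_pos (n - kstar).+1 alpha y)%:R
  <= bhattacharyya Q0 Q1 ^+ alpha.
Proof.
apply: prob_crossing_le => //; [exact: out_law_ge0 | exact: out_law_sum1 | |].
  exact: post_pos_inj.
by move=> j j_lt; rewrite /out_law /Pat post_pos_after // (bhattacharyyaE Q0_gt0 Q1_gt0).
Qed.

Lemma err_prob_le_bhattacharyya :
  err_prob eps P0 P1 kstar alpha khat <= 2 * bhattacharyya Q0 Q1 ^+ alpha.
Proof.
rewrite err_probE mulr_natl mulr2n.
apply: le_trans (lerD prob_pre_crossing_le prob_post_crossing_le).
rewrite -big_split /= big_mkcond; apply: ler_sum => y _.
have prodw_ge0 := prodw_ge0 out_law_ge0 y.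
case: ifP => [/misses_crossing|_]; last by rewrite addr_ge0 ?mulr_ge0.
by case: (crossing _ _ _ _ y); case: (crossing _ _ _ _ y) => //= _; lra.
Qed.

End OfflineCPD.

Unset Implicit Arguments. Set Strict Implicit.

Theorem corollary5p7 (R : realType) (X : finType) (x0 : X)
  (P0 P1 : X -> R)
  (hP0pos : forall x, 0 < P0 x) (hP1pos : forall x, 0 < P1 x)
  (hP0sum : \sum_(x : X) P0 x = 1) (hP1sum : \sum_(x : X) P1 x = 1)
  (hdiff : exists x, P0 x != P1 x)
  (eps : R) (heps : 0 < eps)
  (n kstar : nat) (hn : (1 < n)%N) (hk : (1 < kstar <= n)%N)
  (khat : {ffun 'I_n -> X} -> nat)
  (hkhat : forall y : {ffun 'I_n -> X},
      (1 <= khat y <= n)%N /\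
      (forall k : nat, (1 <= k <= n)%N ->
         cusum eps P0 P1 y k <= cusum eps P0 P1 y (khat y)))
  (alpha : nat) (halpha : (1 <= alpha <= n)%N) :
  err_prob eps P0 P1 kstar alpha khat <= beta_bound eps x0 P0 P1 n alpha.
Proof.
have [alpha_gt|alpha_le] := ltnP n.-1 alpha.
  rewrite err_prob_eq0 // /beta_bound divn_small // expr0 subrr mulr0 mul0r.
  by rewrite mulr_ge0 // le_min lexx powR_ge0.
pose i0 : 'I_n := Ordinal (ltnW hn).
rewrite beta_boundE //; last by case/andP: halpha => ->.
apply: le_trans (err_prob_le_bhattacharyya alpha i0 hk hkhat hP0pos hP1pos hP0sum hP1sum heps) _.
by rewrite ler_pM2l // bhattacharyya_Qout_exprn_le.
Qed.
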